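(* Let $m,n,r,d$ be integers with $m,n\ge 2$, $d\ge 1$ and $0<r<\min\{m,n\}$. Define $$\mathcal{A}^{m\times n}_{d,r} := \left\{ L(\lambda)R(\lambda) : L(\lambda)\in\mathbb{C}[\lambda]^{m\times r},\ R(\lambda)\in\mathbb{C}[\lambda]^{r\times n},\ \deg(L_{*i})+\deg(R_{i*}) = d \text{ for } i=1,\ldots,r\right\},$$ and, for each integer $a=0,1,\ldots,rd$, the subsets $$\mathcal{A}^{m\times n}_{d,r,a} := \left\{ L(\lambda)R(\lambda) : L(\lambda)R(\lambda)\in\mathcal{A}^{m\times n}_{d,r},\ \sum_{i=1}^{r}\deg(R_{i*}) = a\right\}\subseteq \mathbb{C}[\lambda]^{m\times n}_{d,r}.$$ Then (i) $\mathcal{A}^{m\times n}_{d,r} = \bigcup_{0\le a\le rd}\mathcal{A}^{m\times n}_{d,r,a}$; (ii) $\mathbb{C}[\lambda]^{m\times n}_{d,r} = \bigcup_{0\le a\le rd}\overline{\mathcal{A}^{m\times n}_{d,r,a}}$; (iii) for every $P(\lambda)\in\mathbb{C}[\lambda]^{m\times n}_{d,r}$ there exists an integer $a$ with $0\le a\le rd$ such that $P(\lambda)\in\overline{\mathcal{A}^{m\times n}_{d,r,a}}$.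
   Context: $\mathbb{C}[\lambda]^{p\times q}$ denotes the set of $p\times q$ polynomial matrices with complex coefficients. $\mathbb{C}[\lambda]^{m\times n}_{d,r}$ is the set of $m\times n$ complex polynomial matrices of degree at most $d$ and normal rank (rank over the field of rational functions) at most $r$. For a polynomial matrix $X(\lambda)$, $X_{*i}$ denotes its $i$th column and $X_{i*}$ its $i$th row; the degree of a polynomial vector is the maximum degree of its entries, and the degree of the zero polynomial is $-\infty$ (so $\deg(L_{*i})+\deg(R_{i*})=d$ forces $L_{*i}\neq 0$, $R_{i*}\neq 0$). The topology is the one induced by the distance $\mathrm{dist}(P,Q)=\left(\sum_{i=0}^d\|P_i-Q_i\|_F^2\right)^{1/2}$ on polynomial matrices $P(\lambda)=\sum_{i=0}^d\lambda^iP_i$, $Q(\lambda)=\sum_{i=0}^d\lambda^iQ_i$ of degree at most $d$, where $\|\cdot\|_F$ is the Frobenius norm; $\overline{\mathcal{X}}$ denotes the closure of a set $\mathcal{X}$. *)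

From mathcomp Require Import all_boot all_order all_algebra.
From mathcomp Require Import fraction reals.
From mathcomp.real_closed Require Import complex.

Set Implicit Arguments.
Unset Strict Implicit.
Unset Printing Implicit Defensive.

Import Order.TTheory GRing.Theory Num.Theory.
Local Open Scope ring_scope.

(* "size" of a polynomial matrix (vector): max of the sizes of its entries;
   it is 0 iff the matrix is 0, and otherwise equals degree + 1. *)
Definition mxsize (C : nzRingType) (p q : nat) (A : 'M[{poly C}]_(p, q)) : nat :=
  \max_(i < p) \max_(j < q) size (A i j).

(* Degree of a NONZERO polynomial vector/matrix: maximum of the degrees of
   the entries.  (The zero vector has degree -oo; this case is excluded
   separately wherever it matters.) *)
Definition mxdeg (C : nzRingType) (p q : nat) (A : 'M[{poly C}]_(p, q)) : nat :=
  (mxsize A).-1.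

(* deg(A) <= d, for d : nat (also true for A = 0, degree -oo). *)
Definition deg_le (C : nzRingType) (p q : nat) (A : 'M[{poly C}]_(p, q)) (d : nat) : Prop :=
  forall i j, (size (A i j) <= d.+1)%N.

Definition normal_rank (C : idomainType) (p q : nat) (A : 'M[{poly C}]_(p, q)) : nat :=
  \rank (map_mx (@FracField.tofrac _ : {poly C} -> {fraction {poly C}}) A).

Definition polymx_dr (R : rcfType) (m n d r : nat) (P : 'M[{poly R[i]}]_(m, n)) : Prop :=
  deg_le P d /\ (normal_rank P <= r)%N.

(* A^{m x n}_{d,r,a}: P = L R with deg(L_{*i}) + deg(R_{i*}) = d for all i
   (which forces L_{*i} <> 0 and R_{i*} <> 0), and sum_i deg(R_{i*}) = a. *)
Definition Aset_a (R : rcfType) (m n d r a : nat) (P : 'M[{poly R[i]}]_(m, n)) : Prop :=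
  exists (L : 'M[{poly R[i]}]_(m, r)) (Rm : 'M[{poly R[i]}]_(r, n)),
    P = L *m Rm /\
    (forall i : 'I_r, col i L != 0 /\ row i Rm != 0 /\
                      (mxdeg (col i L) + mxdeg (row i Rm))%N = d) /\
    (\sum_(i < r) mxdeg (row i Rm))%N = a.

Definition Aset (R : rcfType) (m n d r : nat) (P : 'M[{poly R[i]}]_(m, n)) : Prop :=
  exists (L : 'M[{poly R[i]}]_(m, r)) (Rm : 'M[{poly R[i]}]_(r, n)),
    P = L *m Rm /\
    (forall i : 'I_r, col i L != 0 /\ row i Rm != 0 /\
                      (mxdeg (col i L) + mxdeg (row i Rm))%N = d).

Definition sqmod (R : rcfType) (z : R[i]) : R := (complex.Re z) ^+ 2 + (complex.Im z) ^+ 2.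

Definition pdist (R : rcfType) (m n d : nat) (P Q : 'M[{poly R[i]}]_(m, n)) : R :=
  Num.sqrt (\sum_(k < d.+1) \sum_(i < m) \sum_(j < n) sqmod ((P i j)`_k - (Q i j)`_k)).

Definition in_closure (R : rcfType) (m n d : nat)
    (X : 'M[{poly R[i]}]_(m, n) -> Prop) (P : 'M[{poly R[i]}]_(m, n)) : Prop :=
  deg_le P d /\
  forall eps : R, 0 < eps -> exists Q, X Q /\ pdist d P Q < eps.

(* Part (i) only re-indexes A_{d,r} by a = sum_i deg R_{i*}.

   Limits of products L R with deg L_{*i} + deg R_{i*} = d have degree at most d, and normal
   rank at most r: if P had normal rank k > r, some k x k minor of P would be invertible at
   some point x of C, hence also the same minor of every nearby matrix, whereas every L R
   has rank at most r at x.

   Conversely, let deg P <= d and normal rank P <= r. Starting from P = 1 * P, elementary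
   row operations that cancel leading coefficients reach P = X A with A row reduced (the
   leading coefficient vectors of the nonzero rows of A are independent), keeping
   size X_{aj} + deg A_{j*} <= d + 1. By the predictable degree property the nonzero rows
   of A are independent over C(lambda), so there are at most r of them and P = L R with
   deg L_{*i} + deg R_{i*} <= d. Adding t lambda^(d - deg R_{i*}) to one entry of each
   column of L makes these degrees exact for every t <> 0, so P is a limit of matrices of
   A_{d,r,a} with a = sum_i deg R_{i*}. *)

From mathcomp Require Import all_boot all_order all_algebra.
From mathcomp Require Import reals.
From mathcomp.real_closed Require Import complex.
From mathcomp Require Import fraction generic_quotient zify ring.
From Stdlib Require Import Classical_Prop.
Import Order.TTheory GRing.Theory Num.Theory.
Local Open Scope ring_scope.

Set Implicit Arguments.
Unset Strict Implicit.
Unset Printing Implicit Defensive.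

(** * Degrees of polynomial matrices *)

Section PolyMatrixSize.
Variable C : nzRingType.
Implicit Types p q : nat.

Lemma mxsize_leP p q (A : 'M[{poly C}]_(p, q)) k :
  reflect (forall i j, size (A i j) <= k)%N (mxsize A <= k)%N.
Proof.
apply: (iffP idP) => [le_A_k i j|le_A_k].
  by apply: leq_trans le_A_k; apply: leq_trans (leq_bigmax i); apply: leq_bigmax j.
by apply/bigmax_leqP => i _; apply/bigmax_leqP => j _; apply: le_A_k.
Qed.

Lemma size_le_mxsize p q (A : 'M[{poly C}]_(p, q)) i j : (size (A i j) <= mxsize A)%N.
Proof. exact: (mxsize_leP _ _ (leqnn _)). Qed.

Lemma deg_le_rowP p q (A : 'M[{poly C}]_(p, q)) d :
  deg_le A d <-> forall i, (mxsize (row i A) <= d.+1)%N.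
Proof.
split=> [degA i | sizeA i j]; first by apply/mxsize_leP => k j; rewrite mxE.
by have := size_le_mxsize (row i A) 0 j; rewrite mxE => /leq_trans; apply.
Qed.

Lemma mxsize_eq0 p q (A : 'M[{poly C}]_(p, q)) : (mxsize A == 0)%N = (A == 0).
Proof.
apply/idP/eqP => [A0|->]; last by rewrite -leqn0; apply/mxsize_leP => i j; rewrite mxE size_poly0.
apply/matrixP => i j; rewrite mxE; apply/eqP; rewrite -size_poly_eq0 -leqn0.
by rewrite -(eqP A0) size_le_mxsize.
Qed.

Lemma mxsize0 p q : mxsize (0 : 'M[{poly C}]_(p, q)) = 0%N.
Proof. by apply/eqP; rewrite mxsize_eq0. Qed.

Lemma mxsizeE p q (A : 'M[{poly C}]_(p, q)) : A != 0 -> mxsize A = (mxdeg A).+1.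
Proof. by rewrite /mxdeg -mxsize_eq0; case: (mxsize A). Qed.

Lemma mxdeg_leE p q (A : 'M[{poly C}]_(p, q)) k : (mxdeg A <= k)%N = (mxsize A <= k.+1)%N.
Proof. by rewrite /mxdeg; case: (mxsize A). Qed.

Lemma size_le_mxdeg p q (A : 'M[{poly C}]_(p, q)) i j : (size (A i j) <= (mxdeg A).+1)%N.
Proof. by apply/mxsize_leP; rewrite -mxdeg_leE. Qed.

Lemma size_polyM_leS (u v : {poly C}) a b :
  (size u <= a.+1)%N -> (size v <= b.+1)%N -> (size (u * v)%R <= (a + b).+1)%N.
Proof. by move=> su sv; apply: leq_trans (size_polyMleq _ _) _; lia. Qed.

Lemma deg_le_mulmx m n r d (L : 'M[{poly C}]_(m, r)) (Rm : 'M[{poly C}]_(r, n)) :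
  (forall i, mxdeg (col i L) + mxdeg (row i Rm) <= d)%N -> deg_le (L *m Rm) d.
Proof.
move=> degLR a b; rewrite mxE; apply: leq_trans (size_sum _ _ _) _.
apply/bigmax_leqP => i _; have := degLR i; rewrite -ltnS; apply: leq_trans.
have := size_le_mxdeg (row i Rm) 0 b; have := size_le_mxdeg (col i L) a 0.
by rewrite !mxE; apply: size_polyM_leS.
Qed.

End PolyMatrixSize.

Lemma normal_rank_mulmx (C : idomainType) p m n (B : 'M[{poly C}]_(p, m)) A :
  (normal_rank (B *m A : 'M_(p, n)) <= normal_rank A)%N.
Proof. by rewrite /normal_rank map_mxM mxrankM_maxr. Qed.

(** * Row reduction *)

Section RowReplacement.
Variables (R : comNzRingType) (m : nat) (j0 : 'I_m) (W : 'rV[R]_m).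
Hypothesis W_pivot : W 0 j0 = 1.

Let e : 'cV[R]_m := delta_mx j0 0.
Let V := W - delta_mx 0 j0.

Definition row_replace_mx : 'M[R]_m := 1%:M + e *m V.
Definition row_replace_invmx : 'M[R]_m := 1%:M - e *m V.

Let V_pivot : V *m e = 0.
Proof.
apply/rowP => k; rewrite !mxE (bigD1 j0) //= big1 => [|j /negPf j_j0]; last first.
  by rewrite [delta_mx _ _ _ _]mxE j_j0 mulr0.
by rewrite !mxE W_pivot !eqxx subrr mul0r addr0.
Qed.

Lemma row_replace_mxK : row_replace_invmx *m row_replace_mx = 1%:M.
Proof.
rewrite /row_replace_invmx /row_replace_mx mulmxDr mulmx1 mulmxBl mul1mx.
by rewrite -!mulmxA [V *m _]mulmxA V_pivot mul0mx mulmx0 subr0 addrNK.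
Qed.

Lemma row_row_replace n (A : 'M[R]_(m, n)) j :
  row j (row_replace_mx *m A) = if j == j0 then W *m A else row j A.
Proof.
rewrite mulmxDl mul1mx raddfD /= -mulmxA row_mul.
have -> : row j e = (j == j0)%:R%:M.
  by apply/rowP => k; rewrite !ord1 !mxE !eqxx andbT; case: (j == j0).
case: eqP => [->|_]; last by rewrite raddf0 mul0mx addr0.
by rewrite mul1mx mulmxBl -rowE addrC subrK.
Qed.

Lemma mulmx_row_replace_invmxE p (X : 'M[R]_(p, m)) a j :
  (X *m row_replace_invmx) a j = if j == j0 then X a j0 else X a j - X a j0 * W 0 j.
Proof.
rewrite mulmxBr mulmx1 mulmxA !mxE big_ord1 !mxE (bigD1 j0) //= big1 => [|l /negPf l_j0].
  by rewrite !mxE !eqxx mulr1 addr0; case: eqP => [->|_]; rewrite ?W_pivot ?subrr ?mulr0 ?subr0.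
by rewrite !mxE l_j0 mulr0.
Qed.

End RowReplacement.

Section RowReduction.
Variables (F : fieldType) (m n : nat).
Implicit Types (A : 'M[{poly F}]_(m, n)) (c : 'rV[F]_m).

Definition lead_row_mx A : 'M[F]_(m, n) := \matrix_(j, b) (A j b)`_(mxdeg (row j A)).

Definition row_size_sum A := (\sum_j mxsize (row j A))%N.

Definition row_supported A c := forall j, row j A = 0 -> c 0 j = 0.

Definition row_reduced A :=
  forall c, row_supported A c -> c *m lead_row_mx A = 0 -> c = 0.

Lemma not_row_reducedP A : ~ row_reduced A ->
  exists c, [/\ row_supported A c, c *m lead_row_mx A = 0 & c != 0].
Proof.
move=> not_red; apply: NNPP => no_c; apply: not_red => c c_supp c_lead.
by have [//|c_neq0] := eqVneq c 0; case: no_c; exists c.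
Qed.

Section LeadCancellation.
Variables (A : 'M[{poly F}]_(m, n)) (c : 'rV[F]_m) (j0 : 'I_m).
Local Notation e j := (mxdeg (row j A)).

Definition lead_cancel_row : 'rV[{poly F}]_m :=
  \row_j ((c 0 j / c 0 j0)%:P * 'X^(e j0 - e j)).

Lemma lead_cancel_row_pivot : c 0 j0 != 0 -> lead_cancel_row 0 j0 = 1.
Proof. by move=> c_j0; rewrite mxE divff // subnn expr0 mulr1. Qed.

Lemma lead_cancel_row_eq0 j : c 0 j = 0 -> lead_cancel_row 0 j = 0.
Proof. by rewrite mxE => ->; rewrite !mul0r. Qed.

Lemma size_lead_cancel_row j : (size (lead_cancel_row 0%R j) <= (e j0 - e j).+1)%N.
Proof.
rewrite mxE; apply: leq_trans (size_polyMleq _ _) _.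
by rewrite size_polyXn addnS; exact: leq_add (size_polyC_leq1 _) (leqnn _).
Qed.

Hypothesis j0_max : forall j, c 0 j != 0 -> (e j <= e j0)%N.

Lemma coef_lead_cancel_term j b :
  (lead_cancel_row 0 j * A j b)`_(e j0) = (c 0 j0)^-1 * (c 0 j * lead_row_mx A j b).
Proof.
have [cj0|/j0_max le_j_j0] := eqVneq (c 0 j) 0.
  by rewrite lead_cancel_row_eq0 // cj0 mul0r coef0 mul0r mulr0.
rewrite !mxE -mulrA coefCM coefXnM ltnNge leq_subr /= subKn //.
by rewrite mulrA [(c 0 j0)^-1 * _]mulrC.
Qed.

Lemma mxsize_lead_cancel :
  c *m lead_row_mx A = 0 -> (mxsize (lead_cancel_row *m A) <= e j0)%N.
Proof.
move=> c_lead; apply/mxsize_leP => i b; rewrite (ord1 i) [_ 0 b]mxE; apply/leq_sizeP => k.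
rewrite leq_eqVlt => /predU1P [<-|lt_k]; rewrite coef_sum.
  under eq_bigr do rewrite coef_lead_cancel_term.
  rewrite -mulr_sumr; have := congr1 (fun M : 'rV_n => M 0 b) c_lead.
  by rewrite !mxE => ->; rewrite mulr0.
rewrite big1 // => j _; apply: nth_default; apply: leq_trans lt_k.
have [cj0|/j0_max le_j_j0] := eqVneq (c 0 j) 0.
  by rewrite lead_cancel_row_eq0 // mul0r size_poly0.
have := size_le_mxdeg (row j A) 0 b; rewrite mxE => size_Ajb.
by apply: leq_trans (size_polyM_leS (size_lead_cancel_row j) size_Ajb) _; rewrite subnK.
Qed.

Lemma size_sub_lead_cancel (u v : {poly F}) j k :
  (size u + e j0 <= k)%N -> (size v + e j <= k)%N ->
  (size (v - u * lead_cancel_row 0 j)%R + e j <= k)%N.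
Proof.
have [cj0 _ size_v | /j0_max le_j_j0 size_u size_v] := eqVneq (c 0 j) 0.
  by rewrite lead_cancel_row_eq0 // mulr0 subr0.
apply: leq_trans (leq_add (size_polyD _ _) (leqnn _)) _.
rewrite size_polyN addn_maxl geq_max size_v /=.
apply: leq_trans (leq_add (size_polyMleq u (lead_cancel_row 0 j)) (leqnn (e j))) _.
have := size_lead_cancel_row j; move: size_u le_j_j0.
by generalize (size u) (size (lead_cancel_row 0 j)) (e j) (e j0); lia.
Qed.

End LeadCancellation.

Section Reduction.
Variables (d : nat) (P : 'M[{poly F}]_(m, n)).

(* Column j of X and row j of A are the candidate factor pair of total degree <= d. *)
Definition reduction_inv (X : 'M[{poly F}]_m) A := [/\ P = X *m A,
  (normal_rank A <= normal_rank P)%N, deg_le A d &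
  forall a j, row j A != 0 -> (size (X a j) + mxdeg (row j A) <= d.+1)%N].

Lemma reduction_inv_init : deg_le P d -> reduction_inv 1%:M P.
Proof.
move=> degP; split; rewrite ?mul1mx // => a j _.
have /deg_le_rowP/(_ j) := degP; rewrite -mxdeg_leE mxE => le_deg_d.
by case: (a == j); rewrite ?size_poly1 ?size_poly0 ?ltnS // ltnW.
Qed.

Lemma reduction_step X A c : reduction_inv X A -> row_supported A c ->
    c *m lead_row_mx A = 0 -> c != 0 ->
  exists X' A', reduction_inv X' A' /\ (row_size_sum A' < row_size_sum A)%N.
Proof.
move=> [PXA rkA degA degX] c_supp c_lead c_neq0.
have [j1 c_j1] : exists j1, c 0 j1 != 0 by apply/rV0Pn.
pose j0 := [arg max_(j > j1 | c 0 j != 0) mxdeg (row j A)].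
have [c_j0 j0_max] : c 0 j0 != 0 /\
    forall j, c 0 j != 0 -> (mxdeg (row j A) <= mxdeg (row j0 A))%N.
  by rewrite /j0; case: arg_maxnP.
set e := mxdeg (row j0 A) in j0_max.
set W := lead_cancel_row A c j0.
have W_pivot : W 0 j0 = 1 := lead_cancel_row_pivot A c_j0.
have size_WA : (mxsize (W *m A) <= e)%N := mxsize_lead_cancel j0_max c_lead.
have A_j0 : row j0 A != 0 by apply: contra c_j0 => /eqP/c_supp ->.
have size_A_j0 : mxsize (row j0 A) = e.+1 := mxsizeE A_j0.
have le_e_d : (e <= d)%N by rewrite -ltnS -size_A_j0; move/deg_le_rowP: degA.
have rowA' := row_row_replace j0 W A.
exists (X *m row_replace_invmx j0 W), (row_replace_mx j0 W *m A); split; last first.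
  rewrite /row_size_sum (bigD1 j0) //= [X in (_ < X)%N](bigD1 j0) //= rowA' eqxx.
  rewrite size_A_j0 -addSn leq_add ?ltnS //.
  by apply/eq_leq/eq_bigr => j /negPf j_j0; rewrite rowA' j_j0.
split.
- by rewrite mulmxA -[X *m _ *m _]mulmxA row_replace_mxK // mulmx1.
- exact: leq_trans (normal_rank_mulmx _ _) rkA.
- apply/deg_le_rowP => j; rewrite rowA'; case: eqP => _; last by move/deg_le_rowP: degA.
  exact: leq_trans size_WA (leq_trans le_e_d _).
move=> a j; have [-> _ | j_j0 A_j] := eqVneq j j0.
  rewrite rowA' mulmx_row_replace_invmxE // !eqxx.
  apply: leq_trans (degX a j0 A_j0); apply: leq_add => //.
  by rewrite mxdeg_leE (leq_trans size_WA).
rewrite rowA' mulmx_row_replace_invmxE // !(negPf j_j0) in A_j *.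
by have := size_sub_lead_cancel j0_max (degX a j0 A_j0) (degX a j A_j).
Qed.

Lemma row_reduction X A : reduction_inv X A ->
  exists X' A', reduction_inv X' A' /\ row_reduced A'.
Proof.
move: {2}(row_size_sum A) (leqnn (row_size_sum A)) => k.
elim: k X A => [|k IHk] X A size_A inv_XA;
  have [red_A | /not_row_reducedP [c [c_supp c_lead c_neq0]]] := classic (row_reduced A);
  try by exists X, A.
all: have [X' [A' [inv_XA' lt_A'_A]]] := reduction_step inv_XA c_supp c_lead c_neq0.
  by move: (leq_trans lt_A'_A size_A).
by apply: IHk inv_XA'; rewrite -ltnS (leq_trans lt_A'_A).
Qed.

End Reduction.
End RowReduction.

(** * Rank factorization *)

Lemma coefM_top (C : nzRingType) (u v : {poly C}) a b :
  (size u <= a.+1)%N -> (size v <= b.+1)%N -> (u * v)`_(a + b) = u`_a * v`_b.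
Proof.
move=> size_u size_v; have lt_a_ab : (a < (a + b).+1)%N by rewrite ltnS leq_addr.
rewrite coefM (bigD1 (Ordinal lt_a_ab)) //= addKn big1 ?addr0 // => i.
rewrite -val_eqE /= => /negPf i_a; have [lt_i_a|lt_a_i|/eqP] := ltngtP i a; last by rewrite i_a.
  by rewrite [v`__]nth_default ?mulr0 //; apply: leq_trans size_v _; lia.
by rewrite [u`__]nth_default ?mul0r //; apply: leq_trans size_u _.
Qed.

Lemma coefM_row_top (C : nzRingType) n (u : {poly C}) (v : 'rV[{poly C}]_n) b M :
  u != 0 -> (size u + mxdeg v <= M)%N ->
  (u * v 0 b)`_M.-1 = if size u + mxdeg v == M then lead_coef u * (v 0 b)`_(mxdeg v) else 0.
Proof.
rewrite -size_poly_gt0 => size_u_gt0 le_M; have size_vb := size_le_mxdeg v 0 b.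
case: eqP => [<- | /eqP ne_M]; last first.
  by apply: nth_default; apply: leq_trans (size_polyMleq _ _) _; lia.
have -> : (size u + mxdeg v).-1 = ((size u).-1 + mxdeg v)%N by lia.
by rewrite coefM_top // prednK.
Qed.

Section ClearDenominators.
Variable R : idomainType.
Local Notation tof := (@FracField.tofrac R).

Lemma fraction_denom (x : {fraction R}) : exists p q : R, q != 0 /\ x * tof q = tof p.
Proof.
elim/quotW: x => f; exists f.1, f.2; split; first exact: denom_ratioP.
unlock FracField.tofrac; rewrite /GRing.mul /= !piE; apply/eqmodP.
rewrite /= FracField.equivfE /FracField.mulf.
rewrite !numden_Ratio ?mulf_neq0 ?denom_ratioP ?oner_neq0 //.
by rewrite !mulr1 mulrC.
Qed.

Lemma rV_clear_denom m (y : 'rV[{fraction R}]_m) :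
  exists (b : R) (z : 'rV[R]_m), b != 0 /\ map_mx tof z = tof b *: y.
Proof.
have /fin_all_exists [pq pqP] :
    forall j, exists pq : R * R, pq.2 != 0 /\ y 0 j * tof pq.2 = tof pq.1.
  by move=> j; have [p [q]] := fraction_denom (y 0 j); exists (p, q).
exists (\prod_j (pq j).2), (\row_j ((pq j).1 * \prod_(i | i != j) (pq i).2)).
split; first by apply/prodf_neq0 => i _; case: (pqP i).
apply/rowP => j; rewrite !mxE rmorphM !rmorph_prod [X in _ = X * _](bigD1 j) //=.
by case: (pqP j) => _ <-; ring.
Qed.

End ClearDenominators.

Section RowReducedRank.
Variables (F : fieldType) (m n : nat).
Implicit Types A : 'M[{poly F}]_(m, n).
Local Notation tof := (@FracField.tofrac {poly F}).

Lemma row_reduced_left_kernel A (z : 'rV[{poly F}]_m) :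
  row_reduced A -> z *m A = 0 -> forall j, row j A != 0 -> z 0 j = 0.
Proof.
move=> red_A zA j0 A_j0; apply/eqP; apply: contraT => z_j0.
pose active j := (row j A != 0) && (z 0 j != 0).
pose D j := (size (z 0%R j) + mxdeg (row j A))%N.
pose jM := [arg max_(j > j0 | active j) D j].
have [act_jM D_max] : active jM /\ forall j, active j -> (D j <= D jM)%N.
  by rewrite /jM; case: arg_maxnP; rewrite /active ?A_j0 ?z_j0.
pose c := \row_j (if active j && (D j == D jM) then lead_coef (z 0 j) else 0).
suff /rowP/(_ jM) : c = 0.
  rewrite !mxE act_jM eqxx /= => /eqP; rewrite lead_coef_eq0.
  by case/andP: act_jM => _ /negPf ->.
apply: red_A => [j A_j|]; first by rewrite mxE /active A_j eqxx.
apply/rowP => b; have := congr1 (fun N : 'rV[{poly F}]_n => (N 0 b)`_(D jM).-1) zA.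
rewrite !mxE coef0 coef_sum => zAb; rewrite -[RHS]zAb; apply: eq_bigr => j _; rewrite !mxE.
have [act_j | /nandP [/negPn/eqP A_j | /negPn/eqP ->]] := boolP (active j); last 2 first.
- have -> : A j b = 0 by have := congr1 (fun N : 'rV[{poly F}]_n => N 0 b) A_j; rewrite !mxE.
  by rewrite /= mul0r mulr0 coef0.
- by rewrite /= !mul0r coef0.
have := coefM_row_top b (proj2 (andP act_j)) (D_max j act_j).
by rewrite mxE => ->; rewrite /= [LHS](fun_if (fun x => x * _)) mul0r.
Qed.

Lemma row_reduced_left_kernel_frac A (y : 'rV[{fraction {poly F}}]_m) :
  row_reduced A -> y *m map_mx tof A = 0 -> forall j, row j A != 0 -> y 0 j = 0.
Proof.
move=> red_A yA j A_j; have [b [z [b_neq0 zE]]] := rV_clear_denom y.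
have zA : z *m A = 0.
  have /matrixP zA0 : map_mx tof (z *m A) = 0 by rewrite map_mxM zE -scalemxAl yA scaler0.
  by apply/matrixP => i k; apply/eqP; have := zA0 i k; rewrite !mxE => /eqP; rewrite tofrac_eq0.
have /rowP/(_ j) := zE; rewrite !mxE (row_reduced_left_kernel red_A zA A_j) tofrac0.
by move/eqP; rewrite eq_sym mulf_eq0 tofrac_eq0 (negPf b_neq0) => /eqP.
Qed.

Lemma card_nonzero_rows A : row_reduced A ->
  (#|[set j | row j A != 0%R]| <= normal_rank A)%N.
Proof.
move=> red_A; set S := [set j | row j A != 0].
have nzS (i : 'I_#|S|) : row (enum_val i) A != 0 by have := enum_valP i; rewrite inE.
suff free_S : row_free (rowsub (fun i : 'I_#|S| => enum_val i) (map_mx tof A)).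
  by rewrite -(eqP free_S) rowsubE mxrankM_maxr.
apply: inj_row_free => v; rewrite rowsubE mulmxA => vA; apply/rowP => i.
have := row_reduced_left_kernel_frac red_A vA (nzS i).
rewrite !mxE (bigD1 i) //= big1 ?addr0 => [|l /negPf l_i]; first by rewrite !mxE eqxx mulr1.
by rewrite !mxE (inj_eq enum_val_inj) l_i mulr0.
Qed.

End RowReducedRank.

Lemma mulmx_compress (R : nzRingType) m p n r (X : 'M[R]_(m, p)) (A : 'M[R]_(p, n))
    (S : {set 'I_p}) (pad : 'rV[R]_n) :
  (#|S| <= r)%N -> (forall j, j \notin S -> row j A = 0) ->
  exists (L : 'M[R]_(m, r)) (Rm : 'M[R]_(r, n)), X *m A = L *m Rm /\
    forall i, (exists2 j, j \in S & row i Rm = row j A /\ col i L = col j X) \/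
              (row i Rm = pad /\ col i L = 0).
Proof.
move=> le_S_r A_S.
pose L : 'M_(m, r) :=
  \matrix_(a, i) oapp (fun k : 'I_#|S| => X a (enum_val k)) 0 (insub (val i)).
pose Rm : 'M_(r, n) :=
  \matrix_(i, b) oapp (fun k : 'I_#|S| => A (enum_val k) b) (pad 0 b) (insub (val i)).
exists L, Rm; split.
  apply/matrixP => a b; rewrite !mxE (bigID (mem S)) /= [X in _ + X]big1 ?addr0; last first.
    move=> j /A_S /rowP /(_ b); rewrite !mxE => ->; exact: mulr0.
  pose G i := oapp (fun k : 'I_#|S| => X a (enum_val k) * A (enum_val k) b) 0 (insub i).
  rewrite big_enum_val /= (eq_bigr (G \o val)) => [|k _]; last by rewrite /G /= valK.
  rewrite (big_ord_widen r G le_S_r) [RHS](bigID (fun i : 'I_r => (i < #|S|)%N)) /=.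
  rewrite [X in _ = _ + X]big1 ?addr0 => [|i /negbTE i_S]; last by rewrite !mxE insubF ?mul0r.
  by apply: eq_bigr => i i_S; rewrite /G !mxE insubT.
move=> i; have [i_S | S_i] := ltnP i #|S|; [left | right].
  exists (enum_val (Ordinal i_S)); first exact: enum_valP.
  by split; apply/matrixP => ? ?; rewrite !mxE insubT.
have S_i' : (val i < #|S|)%N = false by rewrite ltnNge S_i.
by split; apply/matrixP => a b; rewrite !mxE insubF // (ord1 a).
Qed.

Definition degree_split (C : nzRingType) m n r d
    (L : 'M[{poly C}]_(m, r)) (Rm : 'M[{poly C}]_(r, n)) :=
  forall i, [/\ row i Rm != 0, (mxdeg (row i Rm) <= d)%N &
                (mxsize (col i L) <= (d - mxdeg (row i Rm)).+1)%N].

Lemma polymx_factor (F : fieldType) m n d r (P : 'M[{poly F}]_(m, n)) (b0 : 'I_n) :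
  deg_le P d -> (normal_rank P <= r)%N ->
  exists (L : 'M_(m, r)) (Rm : 'M_(r, n)), P = L *m Rm /\ degree_split d L Rm.
Proof.
move=> degP rkP; have [X [A [[PXA rkA degA degX] red_A]]] :=
  row_reduction (reduction_inv_init degP).
pose S := [set j | row j A != 0].
have le_S_r : (#|S| <= r)%N.
  by apply: leq_trans (card_nonzero_rows red_A) (leq_trans rkA rkP).
have A_S j : j \notin S -> row j A = 0 by rewrite inE negbK => /eqP.
(* Unused factor slots get the row e_b0 of R against a zero column of L. *)
have [L [Rm [XA_LR LR_S]]] := mulmx_compress X (delta_mx 0 b0) le_S_r A_S.
exists L, Rm; split; first by rewrite PXA XA_LR.
move=> i; have [[j j_S [-> ->]] | [-> ->]] := LR_S i.
  have A_j : row j A != 0 by rewrite inE in j_S.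
  split=> //; first by rewrite mxdeg_leE; move/deg_le_rowP: degA.
  apply/mxsize_leP => a k; rewrite mxE; have := degX a j A_j.
  by move: (mxdeg _) (size _) => e s; lia.
have size_pad : (mxsize (delta_mx 0%R b0 : 'rV[{poly F}]_n) <= 1)%N.
  by apply/mxsize_leP => ? ?; rewrite mxE; case: (_ && _); rewrite ?size_poly1 ?size_poly0.
split.
- by apply/eqP => /rowP /(_ b0); rewrite !mxE !eqxx; apply/eqP; exact: oner_neq0.
- by rewrite mxdeg_leE (leq_trans size_pad).
- by rewrite mxsize0.
Qed.

(** * Approximation in the coefficient distance *)

Section TopCoefficientFill.
Variables (K : idomainType) (m r : nat) (L : 'M[{poly K}]_(m, r)) (k : 'I_r -> nat) (a0 : 'I_m).

Definition top_fill : 'M[{poly K}]_(m, r) :=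
  \matrix_(a, i) if (a == a0) && ((L a0 i)`_(k i) == 0) then 'X^(k i) else 0.

Lemma mxsize_col_top_fill (t : K) i : t != 0 -> (mxsize (col i L) <= (k i).+1)%N ->
  mxsize (col i (L + t%:P *: top_fill)) = (k i).+1.
Proof.
move=> t_neq0 size_L; apply/eqP; rewrite eqn_leq; apply/andP; split.
  apply/mxsize_leP => a j; rewrite !mxE; apply: leq_trans (size_polyD _ _) _.
  rewrite geq_max; have := size_le_mxsize (col i L) a j; rewrite mxE => /leq_trans ->//=.
  case: ifP => _; last by rewrite mulr0 size_poly0.
  by rewrite mul_polyC -(size_polyXn K (k i)) size_scale_leq.
apply: leq_trans (size_le_mxsize _ a0 0); rewrite !mxE eqxx /=.
have : ((L a0 i + t%:P * (if (L a0 i)`_(k i) == 0 then 'X^(k i) else 0))`_(k i) != 0).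
  rewrite coefD; have [-> | ] := eqVneq ((L a0 i)`_(k i)) 0.
    by rewrite add0r coefCM coefXn eqxx mulr1.
  by rewrite mulr0 coef0 addr0.
by move=> nz; rewrite ltnNge; apply: contra nz => /leq_sizeP/(_ _ (leqnn _)) ->.
Qed.

End TopCoefficientFill.

Lemma ler_sum_entry (K : numDomainType) (I : finType) (F : I -> K) i :
  (forall j, 0 <= F j) -> F i <= \sum_j F j.
Proof. by move=> F_ge0; rewrite (bigD1 i) //= lerDl sumr_ge0. Qed.

Lemma unitmx_perturb (K : numFieldType) k (A B : 'M[K]_k) (delta : K) :
  A \in unitmx -> 0 <= delta -> k%:R * delta * (\sum_i \sum_j `|invmx A i j|) < 1 ->
  (forall i j, `|B i j - A i j| <= delta) -> B \in unitmx.
Proof.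
(* If u B = 0 then u = u (A - B) A^-1, so |u|_1 <= k delta M |u|_1 with k delta M < 1. *)
move=> A_unit delta_ge0 small near_AB; rewrite -row_free_unit.
apply: inj_row_free => u uB; pose M := \sum_i \sum_j `|invmx A i j|.
pose E := (A - B) *m invmx A; pose s := \sum_j `|u 0 j|.
have M_ge0 : 0 <= M by do 2!apply: sumr_ge0 => ? _.
have uE : u = u *m E by rewrite mulmxA mulmxBr uB subr0 mulmxK.
have E_le l j : `|E l j| <= delta * M.
  rewrite mxE (le_trans (ler_norm_sum _ _ _)) // mulr_sumr ler_sum // => p _.
  rewrite normrM ler_pM ?normr_ge0 //; first by rewrite !mxE distrC near_AB.
  exact: (ler_sum_entry (F := fun q => `|invmx A p q|)).
have u_le j : `|u 0 j| <= s * (delta * M).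
  rewrite {1}uE mxE (le_trans (ler_norm_sum _ _ _)) // mulr_suml ler_sum // => l _.
  by rewrite normrM ler_wpM2l.
have s_le0 : s * (1 - k%:R * delta * M) <= 0.
  rewrite mulrBr mulr1 subr_le0 {1}/s (le_trans (ler_sum _ (fun j _ => u_le j))) //.
  suff -> : \sum_(i < k) s * (delta * M) = s * (k%:R * delta * M) by [].
  by rewrite sumr_const card_ord -mulr_natr; ring.
have s0 : s <= 0 by rewrite -(pmulr_lle0 _ (_ : 0 < 1 - k%:R * delta * M)) // subr_gt0.
apply/rowP => j; apply/eqP; rewrite mxE -normr_le0.
exact: le_trans (ler_sum_entry (F := fun j => `|u 0 j|) j _) s0.
Qed.

Lemma unitmx_mxsub_rank (K : fieldType) m n (A : 'M[K]_(m, n)) :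
  exists (f : 'I_(\rank A) -> 'I_m) (g : 'I_(\rank A) -> 'I_n), mxsub f g A \in unitmx.
Proof.
pose f := maxrankfun A.
have rk_fA : \rank (rowsub f A)^T = \rank A by rewrite mxrank_tr; apply/eqP/maxrowsub_free.
have := maxrowsub_free (rowsub f A)^T; move: (maxrankfun _); rewrite rk_fA => g free_g.
exists f, g; rewrite -unitmx_tr -row_free_unit.
by congr row_free: free_g; apply/matrixP => i j; rewrite !mxE.
Qed.

Lemma normal_rank_eval_minor (K : closedFieldType) m n (P : 'M[{poly K}]_(m, n)) :
  exists (f : 'I_(normal_rank P) -> 'I_m) (g : 'I_(normal_rank P) -> 'I_n) (x : K),
    map_mx (horner_eval x) (mxsub f g P) \in unitmx.
Proof.
have [f [g]] := unitmx_mxsub_rank (map_mx (@FracField.tofrac _) P).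
rewrite unitmxE unitfE -map_mxsub det_map_mx tofrac_eq0.
move=> /closed_nonrootP [x det_x]; exists f, g, x.
by rewrite unitmxE unitfE det_map_mx.
Qed.

Lemma mxrank_eval_mxsub_mulmx (K : fieldType) m n r p q (L : 'M[{poly K}]_(m, r))
    (Rm : 'M[{poly K}]_(r, n)) (f : 'I_p -> 'I_m) (g : 'I_q -> 'I_n) (x : K) :
  (\rank (map_mx (horner_eval x) (mxsub f g (L *m Rm))) <= r)%N.
Proof. by rewrite mxsub_mul map_mxM (leq_trans (mxrankM_maxl _ _)) ?rank_leq_col. Qed.

Lemma norm_horner_le (K : numDomainType) d (p : {poly K}) (x e : K) :
  (size p <= d.+1)%N -> (forall t : 'I_d.+1, `|p`_t| <= e) ->
  `|p.[x]| <= e * \sum_(t < d.+1) `|x| ^+ t.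
Proof.
move=> size_p coef_le; rewrite (horner_coef_wide _ size_p) mulr_sumr.
apply: le_trans (ler_norm_sum _ _ _) (ler_sum _ _) => t _.
by rewrite normrM normrX ler_wpM2r ?exprn_ge0.
Qed.

Section ComplexPolyMatrices.
Variable R : rcfType.
Local Open Scope complex_scope.

Lemma sqmod_ge0 (z : R[i]) : 0 <= sqmod z.
Proof. by rewrite /sqmod addr_ge0 // sqr_ge0. Qed.

Lemma sqmodN (z : R[i]) : sqmod (- z) = sqmod z.
Proof. by case: z => x y; rewrite /sqmod /= !sqrrN. Qed.

Lemma sqmodZ (t : R) (z : R[i]) : sqmod (t%:C * z) = t ^+ 2 * sqmod z.
Proof. by case: z => x y; rewrite /sqmod /=; ring. Qed.

Lemma pdist_addZ m n d (P Q : 'M[{poly R[i]}]_(m, n)) (t : R) : 0 <= t ->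
  pdist d P (P + (t%:C)%:P *: Q) = t * pdist d 0 Q.
Proof.
move=> t_ge0; rewrite /pdist -[t in RHS]ger0_norm // -sqrtr_sqr -sqrtrM ?sqr_ge0 //.
congr Num.sqrt; rewrite !mulr_sumr; apply: eq_bigr => k _; rewrite mulr_sumr.
apply: eq_bigr => i _; rewrite mulr_sumr; apply: eq_bigr => j _.
by rewrite !mxE coefD coefCM opprD addNKr coef0 sub0r !sqmodN sqmodZ.
Qed.

Lemma sqmod_coef_le_pdist m n d (P Q : 'M[{poly R[i]}]_(m, n)) (t : 'I_d.+1) i j :
  sqmod ((P i j)`_t - (Q i j)`_t) <= pdist d P Q ^+ 2.
Proof.
rewrite /pdist sqr_sqrtr; last by (do 3!apply: sumr_ge0 => ? _); exact: sqmod_ge0.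
apply: le_trans (ler_sum_entry (F := fun k : 'I_d.+1 => _) t _) => [|k].
  apply: le_trans (ler_sum_entry (F := fun i : 'I_m => _) i _) => [|l].
    by apply: (ler_sum_entry (F := fun j : 'I_n => _)) => ?; apply: sqmod_ge0.
  by apply: sumr_ge0 => ? _; exact: sqmod_ge0.
by (do 2!apply: sumr_ge0 => ? _); exact: sqmod_ge0.
Qed.

Lemma norm_coef_lt_pdist m n d (P Q : 'M[{poly R[i]}]_(m, n)) (eps : R)
    (t : 'I_d.+1) i j :
  pdist d P Q < eps -> `|(P i j)`_t - (Q i j)`_t| < eps%:C.
Proof.
move=> dPQ; have dist_ge0 : 0 <= pdist d P Q := sqrtr_ge0 _.
have eps_ge0 : 0 <= eps := le_trans dist_ge0 (ltW dPQ).
rewrite -(ltr_pXn2r (n := 2)) ?nnegrE ?normr_ge0 ?ler0c // -add_Re2_Im2 -rmorphXn ltcR.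
by rewrite (le_lt_trans (sqmod_coef_le_pdist _ _ t i j)) // ltr_pXn2r.
Qed.

Lemma degree_split_closure m n r d (L : 'M[{poly R[i]}]_(m, r))
    (Rm : 'M[{poly R[i]}]_(r, n)) (a0 : 'I_m) :
  degree_split d L Rm -> in_closure d (Aset_a d r (\sum_i mxdeg (row i Rm))%N) (L *m Rm).
Proof.
move=> split_LR; pose k i := (d - mxdeg (row i Rm))%N.
have size_L i : (mxsize (col i L) <= (k i).+1)%N by case: (split_LR i).
split.
  apply: deg_le_mulmx => i; have [_ le_Rm_d _] := split_LR i.
  by rewrite -(subnK le_Rm_d) leq_add2r mxdeg_leE.
move=> eps eps_gt0; pose D := top_fill L k a0.
pose t := eps / (pdist d 0 (D *m Rm) + 1).
have dist_ge0 : 0 <= pdist d 0 (D *m Rm) by exact: sqrtr_ge0.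
have t_gt0 : 0 < t by rewrite divr_gt0 // ltr_wpDl.
exists ((L + (t%:C)%:P *: D) *m Rm); split.
  exists (L + (t%:C)%:P *: D), Rm; split=> //; split=> // i.
  have [Rm_i le_Rm_d _] := split_LR i.
  have t_neq0 : t%:C != 0 by rewrite eq_complex /= negb_and gt_eqF.
  have size_L' := mxsize_col_top_fill a0 t_neq0 (size_L i).
  rewrite -mxsize_eq0 /mxdeg size_L'.
  by split=> //; split=> //; rewrite subnK.
rewrite mulmxDl -scalemxAl pdist_addZ ?ltW // /t -mulrA gtr_pMr //.
by rewrite mulrC ltr_pdivrMr ?mul1r ?ltrDl ?ltr01 // ltr_wpDl.
Qed.

Lemma Aset_a_deg_le m n d r a (Q : 'M[{poly R[i]}]_(m, n)) :
  Aset_a d r a Q -> deg_le Q d.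
Proof.
move=> [L [Rm [-> [split_LR _]]]]; apply: deg_le_mulmx => i.
by case: (split_LR i) => _ [_ ->].
Qed.

Lemma eval_mxsub_unit_near m n d k (P : 'M[{poly R[i]}]_(m, n))
    (f : 'I_k -> 'I_m) (g : 'I_k -> 'I_n) (x : R[i]) :
  deg_le P d -> map_mx (horner_eval x) (mxsub f g P) \in unitmx ->
  exists2 eps : R, 0 < eps & forall Q, deg_le Q d -> pdist d P Q < eps ->
    map_mx (horner_eval x) (mxsub f g Q) \in unitmx.
Proof.
move=> degP; set A := map_mx _ _ => A_unit.
pose M := \sum_i \sum_j `|invmx A i j|; pose S := \sum_(t < d.+1) `|x| ^+ t.
pose delta := (k%:R * M + 1)^-1.
have M_ge0 : 0 <= M by do 2!apply: sumr_ge0 => ? _.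
have S_ge0 : 0 <= S by apply: sumr_ge0 => t _; rewrite exprn_ge0.
have kM_gt0 : 0 < k%:R * M + 1 by rewrite ltr_wpDl ?mulr_ge0.
have delta_gt0 : 0 < delta by rewrite invr_gt0.
pose eps : R := complex.Re (delta / (S + 1)).
have epsE : eps%:C = delta / (S + 1).
  by rewrite RRe_real // ger0_real // ltW // divr_gt0 // ltr_wpDl.
exists eps; first by rewrite -ltcR epsE divr_gt0 // ltr_wpDl.
move=> Q degQ dPQ; apply: (unitmx_perturb A_unit (ltW delta_gt0)).
  by rewrite mulrAC /delta ltr_pdivrMr // mul1r ltrDl.
move=> i j; rewrite !mxE /horner_eval -hornerN -hornerD.
have size_QP : (size (Q (f i) (g j) - P (f i) (g j))%R <= d.+1)%N.
  by rewrite (leq_trans (size_polyD _ _)) // size_polyN geq_max degP degQ.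
apply: le_trans (norm_horner_le (e := eps%:C) _ size_QP _) _ => [t|].
  by rewrite coefB distrC ltW // norm_coef_lt_pdist.
by rewrite epsE -/S mulrAC ler_pdivrMr ?ler_pM2l ?lerDl // ltr_wpDl.
Qed.

Lemma closure_normal_rank m n d r a (P : 'M[{poly R[i]}]_(m, n)) :
  in_closure d (Aset_a d r a) P -> (normal_rank P <= r)%N.
Proof.
move=> [degP closeP]; rewrite leqNgt; apply/negP => lt_r_rk.
have [f [g [x P_unit]]] := normal_rank_eval_minor P.
have [eps eps_gt0 near_unit] := eval_mxsub_unit_near degP P_unit.
have [Q [AQ dPQ]] := closeP eps eps_gt0.
have /mxrank_unit rk_Q := near_unit Q (Aset_a_deg_le AQ) dPQ.
have [L [Rm [QE _]]] := AQ.
by have := mxrank_eval_mxsub_mulmx L Rm f g x; rewrite -QE rk_Q leqNgt lt_r_rk.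
Qed.

End ComplexPolyMatrices.

Unset Implicit Arguments.
Set Strict Implicit.

Theorem theorem4p3 (R : realType) (m n r d : nat) :
  (2 <= m)%N -> (2 <= n)%N -> (1 <= d)%N -> (0 < r)%N -> (r < minn m n)%N ->
  (* (i) *)
  (forall P : 'M[{poly R[i]}]_(m, n),
     Aset d r P <-> exists a : nat, (a <= r * d)%N /\ Aset_a d r a P) /\
  (* (ii) *)
  (forall P : 'M[{poly R[i]}]_(m, n),
     polymx_dr d r P <->
     exists a : nat, (a <= r * d)%N /\ in_closure d (Aset_a d r a) P) /\
  (* (iii) *)
  (forall P : 'M[{poly R[i]}]_(m, n),
     polymx_dr d r P ->
     exists a : nat, (a <= r * d)%N /\ in_closure d (Aset_a d r a) P).
Proof.
(* Only m, n > 0 is needed, to have indices a0 and b0. *)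
move=> m_ge2 n_ge2 _ _ _.
pose a0 : 'I_m := Ordinal (ltnW m_ge2); pose b0 : 'I_n := Ordinal (ltnW n_ge2).
have sum_le_rd (Rm : 'M[{poly R[i]}]_(r, n)) :
    (forall i, mxdeg (row i Rm) <= d)%N -> (\sum_i mxdeg (row i Rm) <= r * d)%N.
  by move=> le_d; rewrite -[r in (_ <= r * _)%N]card_ord -sum_nat_const leq_sum.
have part_ii (P : 'M[{poly R[i]}]_(m, n)) : polymx_dr d r P <->
    exists a, (a <= r * d)%N /\ in_closure d (Aset_a d r a) P.
  split=> [[degP rkP] | [a [_ closeP]]]; last first.
    by split; [case: closeP | exact: closure_normal_rank closeP].
  have [L [Rm [-> split_LR]]] := polymx_factor b0 degP rkP.
  exists (\sum_i mxdeg (row i Rm))%N; split; first by apply: sum_le_rd => i; case: (split_LR i).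
  exact: degree_split_closure a0 split_LR.
split; last by split=> // P /part_ii.
move=> P; split=> [[L [Rm [PLR split_LR]]] | [a [_ [L [Rm [PLR [split_LR _]]]]]]]; last first.
  by exists L, Rm.
exists (\sum_i mxdeg (row i Rm))%N; split; last by exists L, Rm.
by apply: sum_le_rd => i; have [_ [_ <-]] := split_LR i; apply: leq_addl.
Qed.
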